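(* Every Pisot number $q \in (1, 1.933]$ satisfies $|q'| \geq \frac{\sqrt5-1}{2}$ for all Galois conjugates $q'$ of $q$.
   Context: A Pisot number is a real algebraic integer $q>1$ all of whose other Galois conjugates have absolute value strictly less than $1$. *)

From HB Require Import structures.
From mathcomp Require Import all_boot all_order all_algebra all_field.
Set Implicit Arguments. Unset Strict Implicit. Unset Printing Implicit Defensive.
Import Order.TTheory GRing.Theory Num.Theory.
Local Open Scope ring_scope.

Definition galois_conjugate (q z : algC) : bool := root (minCpoly q) z.

Definition pisot (q : algC) : Prop :=
  [/\ q \is Creal, 1 < q, q \in Aint &
      forall z : algC, galois_conjugate q z -> z != q -> `|z| < 1].

(* Factor the minimal polynomial of q as P = (X - q)(X - z) C, where C is the
   product of the X - a over the remaining conjugates, all in the open unit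
   disk.  The claim is |z|^2 + |z| >= 1, and the constant coefficient
   a0 = q z C(0) of P is a nonzero integer.
   - If z is not real, z^* is a root of C, so 1 <= |a0| <= q |z|^2 < 2 |z|^2.
   - If z is real and C = 1, q is a quadratic unit, hence the golden ratio.
   - Otherwise |C(0)| < 1 forces a0 = +-1 and q |z| > 1.  A Schur-type
     inequality |c1 + c0 sigma| <= 1 - |c0|^2 on the coefficients of C
     (sigma the sum of its roots), combined with the integrality of the
     coefficients of P, produces an integer k with
     |q z k - (q + z)(q z - 1)| <= (q z)^2 - 1.  When q <= 1.933 and
     |z|^2 + |z| < 1 the interval this allows for k contains no integer. *)

From HB Require Import structures.
From mathcomp Require Import all_boot all_order all_algebra all_field.
From mathcomp Require Import ring lra zify.

Set Implicit Arguments.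
Unset Strict Implicit.
Unset Printing Implicit Defensive.

Import Order.TTheory GRing.Theory Num.Theory.
Local Open Scope ring_scope.

Section XsubCMul.
Variable R : nzRingType.
Implicit Types (a : R) (p : {poly R}).

Lemma coef0_XsubC_mul a p : (('X - a%:P) * p)`_0 = - a * p`_0.
Proof. by rewrite mulrBl coefB coefXM coefCM sub0r mulNr. Qed.

Lemma coef1_XsubC_mul a p : (('X - a%:P) * p)`_1 = p`_0 - a * p`_1.
Proof. by rewrite mulrBl coefB coefXM coefCM. Qed.

End XsubCMul.

Lemma root_deriv_XsubC_mul (R : comNzRingType) (a : R) (p : {poly R}) :
  root (('X - a%:P) * p)^`() a = root p a.
Proof.
by rewrite derivM derivXsubC mul1r /root !hornerE subrr mul0r addr0.
Qed.

Section UnitDiskRoots.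
Variable C : numClosedFieldType.
Implicit Types (a b : C) (s : seq C).

Lemma norm_coef0_prod_XsubC_le s b : b \in s -> {in s, forall a, `|a| <= 1} ->
  `|(\prod_(a <- s) ('X - a%:P))`_0| <= `|b|.
Proof.
move=> sb s_le1; rewrite coef0_prod_XsubC normrM normrX normrN1 expr1n mul1r.
rewrite normr_prod (perm_big _ (perm_to_rem sb)) big_cons ler_piMr // big_seq.
by apply: prodr_ile1 => a /mem_rem/s_le1 ->; rewrite andbT.
Qed.

Lemma norm_coef0_prod_XsubC_le1 s : {in s, forall a, `|a| <= 1} ->
  `|(\prod_(a <- s) ('X - a%:P))`_0| <= 1.
Proof.
move=> s_le1; rewrite coef0_prod_XsubC normrM normrX normrN1 expr1n mul1r.
by rewrite normr_prod big_seq; apply: prodr_ile1 => a /s_le1 ->; rewrite andbT.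
Qed.

Lemma prod_XsubC_schur_bound s : {in s, forall a, `|a| <= 1} ->
  let c := \prod_(a <- s) ('X - a%:P) in
  `|c`_1 + c`_0 * (\sum_(a <- s) a)^*| <= 1 - `|c`_0| ^+ 2.
Proof.
elim: s => [|a s IHs] s_le1 /=.
  by rewrite !big_nil !coefC /= normr1 expr1n subrr rmorph0 mulr0 addr0 normr0.
have a_le1 : `|a| <= 1 by apply: s_le1; rewrite mem_head.
have {}s_le1 : {in s, forall b, `|b| <= 1}.
  by move=> b sb; apply: s_le1; rewrite in_cons sb orbT.
have c0_le1 := norm_coef0_prod_XsubC_le1 s_le1.
have {IHs} := IHs s_le1.
rewrite !big_cons coef0_XsubC_mul coef1_XsubC_mul.
set c0 := _`_0; set c1 := _`_1; set sg := \sum_(_ <- _) _ => IH.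
have -> : c0 - a * c1 + - a * c0 * (a + sg)^* =
    (1 - `|a| ^+ 2) * c0 - a * (c1 + c0 * sg^*).
  by rewrite normCK rmorphD /=; ring.
rewrite normrM normrN exprMn; apply: le_trans (ler_normB _ _) _.
rewrite !normrM ger0_norm ?subr_ge0 ?exprn_ile1 //.
apply: le_trans (lerD (lexx _) (ler_wpM2l (normr_ge0 a) IH)) _.
rewrite -subr_ge0.
have -> : 1 - `|a| ^+ 2 * `|c0| ^+ 2 - ((1 - `|a| ^+ 2) * `|c0| + `|a| * (1 - `|c0| ^+ 2))
   = (1 - `|a|) * (1 - `|c0|) * (1 - `|a| * `|c0|) by ring.
by rewrite !mulr_ge0 // subr_ge0 // mulr_ile1.
Qed.

Lemma golden_ratio_le (r : C) : 0 <= r -> 1 <= r ^+ 2 + r -> (sqrtC 5 - 1) / 2 <= r.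
Proof.
move=> r_ge0 r_ge.
rewrite ler_pdivrMr ?ltr0n // lerBlDr.
have r2_ge0 : 0 <= r * 2 + 1 by rewrite addr_ge0 ?mulr_ge0 ?ler0n.
rewrite -ler_sqr ?nnegrE ?sqrtC_ge0 ?ler0n // sqrtCK.
have -> : (r * 2 + 1) ^+ 2 = 4 * (r ^+ 2 + r) + 1 by ring.
have -> : (5 : C) = 4 * 1 + 1 by ring.
by rewrite lerD2r ler_wpM2l ?ler0n.
Qed.

End UnitDiskRoots.

Lemma prod_XsubC_two_roots (F : closedFieldType) (p : {poly F}) x y :
    p \is monic -> root p x -> root p y -> y != x ->
  {s | p = ('X - x%:P) * (('X - y%:P) * \prod_(a <- s) ('X - a%:P))}.
Proof.
move=> p_monic px py y_neq_x; have [rs] := closed_field_poly_normal p.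
rewrite (monicP p_monic) scale1r => p_rs.
have x_rs : x \in rs by rewrite -root_prod_XsubC -p_rs.
have y_rs : y \in rem x rs.
  have : y \in rs by rewrite -root_prod_XsubC -p_rs.
  by rewrite (perm_mem (perm_to_rem x_rs)) in_cons (negPf y_neq_x).
exists (rem y (rem x rs)).
rewrite p_rs (perm_big _ (perm_to_rem x_rs)) big_cons.
by rewrite (perm_big _ (perm_to_rem y_rs)) big_cons.
Qed.

Lemma root_conjC_real_poly (p : {poly algC}) z :
  p \is a polyOver Creal -> root p z -> root p z^*.
Proof.
move=> /allP p_real pz.
have <- : map_poly Num.conj_op p = p by apply: map_poly_id => c /p_real /conj_Creal.
by rewrite fmorph_root.
Qed.

Section MinCpoly.
Variable x : algC.

Lemma size_minCpoly_le (r : {poly rat}) :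
  r != 0 -> root (map_poly ratr r) x -> (size (minCpoly x) <= size r)%N.
Proof.
have [p [-> _] p_min] := minCpolyP x.
by rewrite p_min size_map_poly; apply: dvdp_leq.
Qed.

Lemma minCpoly_simple_root : ~~ root (minCpoly x)^`() x.
Proof.
have [p [Dp p_monic] _] := minCpolyP x.
have p_gt1 : (1 < size p)%N by have := size_minCpoly x; rewrite Dp size_map_poly.
have dp_neq0 : p^`() != 0.
  have : p^`()`_(size p).-2 != 0.
    have sp_gt0 : (0 < (size p).-1)%N by rewrite -subn1 subn_gt0.
    by rewrite coef_deriv prednK // -lead_coefE (monicP p_monic) pnatr_eq0 -lt0n.
  by apply: contraNneq => ->; rewrite coef0.
apply/negP; rewrite Dp deriv_map => /(size_minCpoly_le dp_neq0).
by rewrite Dp size_map_poly leqNgt lt_size_deriv ?monic_neq0.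
Qed.

Lemma minCpoly_coef0_neq0 : x != 0 -> (minCpoly x)`_0 != 0.
Proof.
move=> x_neq0; have [p [Dp p_monic] _] := minCpolyP x.
apply/negP; rewrite Dp coef_map /= fmorph_eq0 => /eqP p0.
have /dvdpP [r Dr] : 'X - 0%:P %| p by rewrite dvdp_XsubCl /root horner_coef0 p0.
have r_neq0 : r != 0.
  by apply: contraTneq (monic_neq0 p_monic) => r0; rewrite Dr r0 mul0r eqxx.
have : root (map_poly ratr r) x.
  have := root_minCpoly x; rewrite Dp Dr rmorphM /= rootM map_polyXsubC /= rmorph0.
  by rewrite root_XsubC (negPf x_neq0) orbF.
move/(size_minCpoly_le r_neq0); rewrite Dp size_map_poly Dr.
by rewrite size_Mmonic ?monicXsubC // size_XsubC addn2 ltnn.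
Qed.

End MinCpoly.

Section RealEstimates.
Variable R : realFieldType.
Implicit Types q r : R.

Lemma key_lower_gt2 q r : 0 < r -> r ^+ 2 + r < 1 -> 1 < q * r ->
  2 * (q * r) < (q * r + 1) * (q + 1) * (1 - r).
Proof.
rewrite expr2 => r_gt0 r_small qr_gt1.
have r_lt : r < 2 / 3 by nra.
have sq_term_ge0 : 0 <= (1 - r) * (q * r - 1) ^+ 2 by rewrite mulr_ge0 ?sqr_ge0 //; lra.
have gap_term_gt0 : 0 < (3 - 4 * r - r * r) * (q * r - 1) by rewrite mulr_gt0 //; lra.
nra.
Qed.

Lemma key_upper_lt3 q r : 1000 * q <= 1933 -> 0 < r -> r ^+ 2 + r < 1 -> 1 < q * r ->
  (q * r + 1) * (q - 1) * (1 + r) < 3 * (q * r).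
Proof.
rewrite expr2 => q_le r_gt0 r_small qr_gt1.
have r_lt : r < 2 / 3 by nra.
have q_term_ge0 : 0 <= (1 + r) * ((q * r - 1) * ((1933 - 1000 * q) * r)).
  by rewrite !mulr_ge0 //; nra.
nra.
Qed.

Lemma key_upper_lt1 q r : 1000 * q <= 1933 -> 0 < r -> r ^+ 2 + r < 1 -> 1 < q * r ->
  (q * r - 1) * (q + 1) * (1 + r) < q * r.
Proof.
rewrite expr2 => q_le r_gt0 r_small qr_gt1.
have r_lt : r < 2 / 3 by nra.
have q_term_ge0 : 0 <= (1 + r) * ((q * r - 1) * ((1933 - 1000 * q) * r)).
  by rewrite !mulr_ge0 //; nra.
nra.
Qed.

Lemma key_golden_bound_pos q r (k : int) : 1000 * q <= 1933 -> 0 < r -> 1 < q * r ->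
  `|q * r * k%:~R - (q + r) * (q * r - 1)| <= (q * r) ^+ 2 - 1 -> 1 <= r ^+ 2 + r.
Proof.
move=> q_le r_gt0 qr_gt1; rewrite ler_norml => /andP [k_lo k_hi].
rewrite leNgt; apply/negP => r_small.
have qr_gt0 : 0 < q * r := lt_trans ltr01 qr_gt1.
have r_lt1 : r < 1 by have := sqr_ge0 r; lra.
have q_gt1 : 1 < q by nra.
have qrk_gt0 : 0 < q * r * k%:~R.
  have : 0 < (q * r - 1) * (q - 1) * (1 - r) by rewrite !mulr_gt0 // subr_gt0.
  lra.
have k_ge1 : 1 <= k%:~R :> R.
  by rewrite ler1z -gtz0_ge1 -(ltr0z R) -(pmulr_rgt0 _ qr_gt0).
have := key_upper_lt1 q_le r_gt0 r_small qr_gt1.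
have : q * r <= q * r * k%:~R by rewrite ler_peMr // ltW.
lra.
Qed.

Lemma key_golden_bound_neg q r (k : int) : 1000 * q <= 1933 -> 0 < r -> 1 < q * r ->
  `|q * r * k%:~R - (q - r) * (q * r + 1)| <= (q * r) ^+ 2 - 1 -> 1 <= r ^+ 2 + r.
Proof.
move=> q_le r_gt0 qr_gt1; rewrite ler_norml => /andP [k_lo k_hi].
rewrite leNgt; apply/negP => r_small.
have qr_gt0 : 0 < q * r := lt_trans ltr01 qr_gt1.
have k_gt2 : 2 < k%:~R :> R.
  rewrite -(ltr_pM2l qr_gt0); have := key_lower_gt2 r_gt0 r_small qr_gt1; lra.
have k_lt3 : k%:~R < 3 :> R.
  rewrite -(ltr_pM2l qr_gt0); have := key_upper_lt3 q_le r_gt0 r_small qr_gt1; lra.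
have : (2 < k)%R by rewrite -(ltr_int R).
have : (k < 3)%R by rewrite -(ltr_int R).
by clear; lia.
Qed.

Lemma key_golden_bound q z (k : int) : 1000 * q <= 1933 -> 1 < q * `|z| ->
  `|q * z * k%:~R - (q + z) * (q * z - 1)| <= (q * z) ^+ 2 - 1 ->
  1 <= `|z| ^+ 2 + `|z|.
Proof.
move=> q_le qz_gt1 k_bound.
have [z_gt0 | z_le0] := ltrP 0 z.
  by rewrite gtr0_norm // in qz_gt1 *; apply: key_golden_bound_pos k_bound.
have z_lt0 : z < 0.
  rewrite lt_neqAle z_le0 andbT.
  by apply: contraTneq qz_gt1 => ->; rewrite normr0 mulr0 ltr10.
rewrite ltr0_norm // in qz_gt1 *.
apply: (key_golden_bound_neg (k := k) q_le _ qz_gt1); first by rewrite oppr_gt0.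
have -> : q * - z * k%:~R - (q - - z) * (q * - z + 1) =
          - (q * z * k%:~R - (q + z) * (q * z - 1)) by ring.
by rewrite normrN mulrN sqrrN.
Qed.

Lemma quadratic_golden_bound q z (e m : int) : 1 < q -> 1000 * q <= 1933 ->
  `|z| < 1 -> q * z = e%:~R -> e != 0 -> q + z = m%:~R -> 1 <= `|z| ^+ 2 + `|z|.
Proof.
move=> q_gt1 q_le; rewrite ltr_norml => /andP [z_gtN1 z_lt1] qz_e e_neq0 qz_m.
have [e1 | eN1] : e = 1 \/ e = -1.
  have : (-2 < e)%R by rewrite -(ltr_int R) -qz_e; nra.
  have : (e < 2)%R by rewrite -(ltr_int R) -qz_e; nra.
  by move: e_neq0; clear; lia.
- rewrite e1 in qz_e.
  have : (2 < m)%R by rewrite -(ltr_int R) -qz_m; nra.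
  have : (m < 3)%R by rewrite -(ltr_int R) -qz_m; lra.
  by clear; lia.
- rewrite eN1 in qz_e.
  have z_lt0 : z < 0 by nra.
  have m1 : m = 1.
    have : (0 < m)%R by rewrite -(ltr_int R) -qz_m; lra.
    have : (m < 2)%R by rewrite -(ltr_int R) -qz_m; lra.
    by clear; lia.
  have z_eq : z = 1 - q by move: qz_m; rewrite m1; lra.
  by rewrite ltr0_norm // z_eq; rewrite z_eq in qz_e; nra.
Qed.

End RealEstimates.

(* Estimates on real elements of algC are proved in algR, whose order and
   norm are those of algC. *)
Lemma ler_algR (x y : algR) : (x <= y) = (algRval x <= algRval y). Proof. by []. Qed.
Lemma ltr_algR (x y : algR) : (x < y) = (algRval x < algRval y). Proof. by []. Qed.
Lemma normr_algR (x : algR) : algRval `|x| = `|algRval x|. Proof. by []. Qed.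

Lemma key_golden_boundC (q z : algC) (k : int) : q \is Creal -> z \is Creal ->
  1000 * q <= 1933 -> 1 < q * `|z| ->
  `|q * z * k%:~R - (q + z) * (q * z - 1)| <= (q * z) ^+ 2 - 1 ->
  1 <= `|z| ^+ 2 + `|z|.
Proof.
move=> q_real z_real q_le qz_gt1 k_bound.
pose Q := in_algR q_real; pose Z := in_algR z_real.
have Q_le : 1000 * Q <= 1933 by rewrite ler_algR rmorphM !rmorph_nat.
have QZ_gt1 : 1 < Q * `|Z| by rewrite ltr_algR rmorphM rmorph1.
have QZ_bound : `|Q * Z * k%:~R - (Q + Z) * (Q * Z - 1)| <= (Q * Z) ^+ 2 - 1.
  rewrite ler_algR normr_algR.
  by rewrite !(rmorphB, rmorphM, rmorphD, rmorphXn, rmorph_int, rmorph1).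
have := key_golden_bound Q_le QZ_gt1 QZ_bound.
by rewrite ler_algR !(rmorphD, rmorphXn, rmorph1).
Qed.

Lemma quadratic_golden_boundC (q z : algC) (e m : int) : q \is Creal -> z \is Creal ->
  1 < q -> 1000 * q <= 1933 -> `|z| < 1 ->
  q * z = e%:~R -> e != 0 -> q + z = m%:~R -> 1 <= `|z| ^+ 2 + `|z|.
Proof.
move=> q_real z_real q_gt1 q_le z_lt1 qz_e e_neq0 qz_m.
pose Q := in_algR q_real; pose Z := in_algR z_real.
have Q_gt1 : 1 < Q by rewrite ltr_algR rmorph1.
have Q_le : 1000 * Q <= 1933 by rewrite ler_algR rmorphM !rmorph_nat.
have Z_lt1 : `|Z| < 1 by rewrite ltr_algR rmorph1.
have QZ_e : Q * Z = e%:~R by apply: val_inj; rewrite rmorphM rmorph_int.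
have QZ_m : Q + Z = m%:~R by apply: val_inj; rewrite rmorphD rmorph_int.
have := quadratic_golden_bound Q_gt1 Q_le Z_lt1 QZ_e e_neq0 QZ_m.
by rewrite ler_algR !(rmorphD, rmorphXn, rmorph1).
Qed.

Section PisotFactorization.
Variables (P : {poly algC}) (q z : algC) (s : seq algC).
Local Notation C := (\prod_(a <- s) ('X - a%:P)).
Hypothesis P_factor : P = ('X - q%:P) * (('X - z%:P) * C).
Hypotheses (P_int : P \is a polyOver Num.int) (P0_neq0 : P`_0 != 0).
Hypotheses (q_real : q \is Creal) (q_gt1 : 1 < q) (q_le : 1000 * q <= 1933).
Hypotheses (z_lt1 : `|z| < 1) (s_lt1 : {in s, forall a, `|a| < 1}).

Let q_gt0 : 0 < q. Proof. exact: lt_trans ltr01 q_gt1. Qed.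
Let q_lt2 : q < 2.
Proof.
have : 1000 * q < 1000 * 2 by apply: le_lt_trans q_le _; rewrite -natrM ltr_nat.
by rewrite ltr_pM2l ?ltr0n.
Qed.
Let s_le1 : {in s, forall a, `|a| <= 1}. Proof. by move=> a /s_lt1 /ltW. Qed.
Let P_coef_int i : P`_i \is a Num.int. Proof. exact: polyOverP. Qed.

Lemma coef0_pisot_factor : P`_0 = q * z * C`_0.
Proof. by rewrite P_factor !coef0_XsubC_mul mulrA mulrNN. Qed.

Lemma coef1_pisot_factor : P`_1 = q * z * C`_1 - (q + z) * C`_0.
Proof. by rewrite P_factor !coef1_XsubC_mul !coef0_XsubC_mul; ring. Qed.

Lemma coef_top_pisot_factor : P`_(size s).+1 = - (q + (z + \sum_(a <- s) a)).
Proof.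
have -> : P = \prod_(a <- [:: q, z & s]) ('X - a%:P) by rewrite P_factor !big_cons.
by rewrite (coefPn_prod_XsubC (ps := [:: q, z & s])) // !big_cons.
Qed.

Lemma norm_coef0_pisot_factor : `|P`_0| = q * `|z| * `|C`_0|.
Proof. by rewrite coef0_pisot_factor !normrM gtr0_norm. Qed.

Let norm_coef0_ge1 : 1 <= `|P`_0|.
Proof. exact: norm_intr_ge1. Qed.

Lemma nonreal_factor_golden_bound : z \isn't Creal -> 1 <= `|z| ^+ 2 + `|z|.
Proof.
move=> z_nonreal.
have zc_root : root P z^*.
  apply: root_conjC_real_poly; first by apply: polyOverS P_int => c /Rreal_int.
  by rewrite P_factor rootM root_XsubC rootM root_XsubC eqxx orbT.
have zc_s : z^* \in s.
  move: zc_root; rewrite P_factor !rootM !root_XsubC root_prod_XsubC.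
  have -> : (z^* == q) = false.
    apply/negbTE; apply: contra z_nonreal => /eqP zc_q.
    by rewrite -(conjCK z) zc_q (conj_Creal q_real).
  by rewrite -CrealE (negPf z_nonreal).
have C0_le : `|C`_0| <= `|z| by rewrite -(norm_conjC z); exact: norm_coef0_prod_XsubC_le.
have z_le1 : `|z| <= 1 := ltW z_lt1.
apply: le_trans norm_coef0_ge1 _.
rewrite norm_coef0_pisot_factor -mulrA.
apply: le_trans (_ : 2 * `|z| ^+ 2 <= _).
  by rewrite expr2 ler_pM ?mulr_ge0 ?ler_wpM2l // ltW.
by rewrite mulr2n mulrDl mul1r lerD2l expr2 ler_piMr.
Qed.

Lemma quadratic_factor_golden_bound :
  s = [::] -> z \is Creal -> 1 <= `|z| ^+ 2 + `|z|.
Proof.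
move=> s0 z_real.
have C1 : C = 1 by rewrite s0 big_nil.
have /intrP [e De] := P_coef_int 0.
have /intrP [m Dm] := P_coef_int 1.
apply: (quadratic_golden_boundC (e := e) (m := - m) q_real z_real q_gt1 q_le z_lt1).
- by rewrite -De coef0_pisot_factor C1 coefC mulr1.
- by apply: contraNneq P0_neq0 => e0; rewrite De e0.
- by rewrite intrN -Dm coef1_pisot_factor C1 !coefC /=; ring.
Qed.

Section RealConjugate.
Hypotheses (z_real : z \is Creal) (s_neq0 : s != [::]).

Lemma norm_coef0_cofactor_lt1 : `|C`_0| < 1.
Proof.
case: s s_neq0 s_lt1 s_le1 => // b s' _ s'_lt1 s'_le1.
apply: le_lt_trans (norm_coef0_prod_XsubC_le (mem_head b s') s'_le1) _.
by apply: s'_lt1; rewrite mem_head.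
Qed.

Lemma norm_coef0_pisot_factor_eq1 : `|P`_0| = 1.
Proof.
have /natrP [n Dn] := natr_norm_int (P_coef_int 0).
have : `|P`_0| < 2.
  rewrite norm_coef0_pisot_factor -mulrA; apply: le_lt_trans q_lt2.
  by rewrite ler_piMr ?(ltW q_gt0) // mulr_ile1 ?(ltW z_lt1) ?(ltW norm_coef0_cofactor_lt1).
move: norm_coef0_ge1; rewrite Dn ler1n ltr_nat.
by case: n {Dn} => [|[|]].
Qed.

Lemma mul_norm_conjugate_gt1 : 1 < q * `|z|.
Proof.
have z_neq0 : z != 0.
  by apply: contraNneq P0_neq0 => z0; rewrite coef0_pisot_factor z0 mulr0 mul0r.
rewrite -norm_coef0_pisot_factor_eq1 norm_coef0_pisot_factor.
by rewrite gtr_pMr ?norm_coef0_cofactor_lt1 // mulr_gt0 // normr_gt0.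
Qed.

Lemma sum_cofactor_roots_real : \sum_(a <- s) a \is Creal.
Proof.
have := Rreal_int (P_coef_int (size s).+1); rewrite coef_top_pisot_factor rpredN.
move=> qzs_real.
have -> : \sum_(a <- s) a = q + (z + \sum_(a <- s) a) - q - z by ring.
by rewrite !rpredB.
Qed.

Lemma exists_key_integer :
  exists k : int, `|q * z * k%:~R - (q + z) * (q * z - 1)| <= (q * z) ^+ 2 - 1.
Proof.
have a0_sq : P`_0 ^+ 2 = 1.
  by rewrite -real_normK ?Rreal_int // norm_coef0_pisot_factor_eq1 expr1n.
have /intrP [k Dk] : P`_0 * (P`_1 - P`_0 * P`_(size s).+1) \is a Num.int.
  by rewrite rpredM ?rpredB ?rpredM.
exists k.
have -> : q * z * k%:~R - (q + z) * (q * z - 1) =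
          P`_0 * ((q * z) ^+ 2 * (C`_1 + C`_0 * \sum_(a <- s) a)).
  have key_id : q * z * (P`_1 - P`_0 * P`_(size s).+1) - P`_0 * ((q + z) * (q * z - 1)) =
                 (q * z) ^+ 2 * (C`_1 + C`_0 * \sum_(a <- s) a).
    by rewrite coef_top_pisot_factor coef1_pisot_factor coef0_pisot_factor; ring.
  apply/eqP; rewrite -subr_eq0 -Dk -key_id.
  have -> : forall a0 b x : algC,
      q * z * (a0 * b) - x - a0 * (q * z * b - a0 * x) = (a0 ^+ 2 - 1) * x.
    by move=> *; ring.
  by rewrite a0_sq subrr mul0r.
have schur := prod_XsubC_schur_bound s_le1.
rewrite /= (conj_Creal sum_cofactor_roots_real) in schur.
have qz_norm : `|q * z| = q * `|z| by rewrite normrM gtr0_norm.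
have qz_sq : (q * z) ^+ 2 = (q * `|z|) ^+ 2 by rewrite -qz_norm real_normK ?rpredM.
rewrite normrM norm_coef0_pisot_factor_eq1 mul1r normrM normrX qz_norm qz_sq.
have qz_ge0 : 0 <= (q * `|z|) ^+ 2 := exprn_ge0 2 (mulr_ge0 (ltW q_gt0) (normr_ge0 z)).
apply: le_trans (ler_wpM2l qz_ge0 schur) _.
by rewrite mulrBr mulr1 -exprMn -norm_coef0_pisot_factor norm_coef0_pisot_factor_eq1 expr1n.
Qed.

Lemma real_factor_golden_bound : 1 <= `|z| ^+ 2 + `|z|.
Proof.
have [k k_bound] := exists_key_integer.
exact: key_golden_boundC q_real z_real q_le mul_norm_conjugate_gt1 k_bound.
Qed.

End RealConjugate.

Lemma pisot_factor_golden_bound : 1 <= `|z| ^+ 2 + `|z|.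
Proof.
have [z_real | z_nonreal] := boolP (z \is Creal); last exact: nonreal_factor_golden_bound.
have [s0 | s_neq0] := eqVneq s [::]; first exact: quadratic_factor_golden_bound.
exact: real_factor_golden_bound.
Qed.
End PisotFactorization.

Unset Implicit Arguments.

Theorem theorem5p1 (q : algC) :
  pisot q -> q <= 1933%:R / 1000%:R ->
  forall z : algC, galois_conjugate q z -> (sqrtC 5 - 1) / 2 <= `|z|.
Proof.
case=> q_real q_gt1 q_int conj_lt1 q_le z q_z.
have q_gt0 : 0 < q := lt_trans ltr01 q_gt1.
apply: golden_ratio_le => //.
have [-> | z_neq_q] := eqVneq z q.
  by rewrite gtr0_norm // (le_trans (ltW q_gt1)) // lerDr exprn_ge0 // ltW.
have [s P_factor] := prod_XsubC_two_roots (minCpoly_monic q) (root_minCpoly q) q_z z_neq_q.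
have q_notin_s : q \notin s.
  apply: contraNN (minCpoly_simple_root q) => q_s.
  by rewrite P_factor root_deriv_XsubC_mul rootM root_prod_XsubC q_s orbT.
apply: (pisot_factor_golden_bound P_factor) => //.
- by rewrite minCpoly_coef0_neq0 // gt_eqF.
- by rewrite mulrC -ler_pdivlMr ?ltr0n.
- exact: conj_lt1.
- move=> a a_s; apply: conj_lt1; last by apply: contraNneq q_notin_s => <-.
  by rewrite /galois_conjugate P_factor !rootM root_prod_XsubC a_s !orbT.
Qed.
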